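(* Let $P(z)=z^3+az^2+bz+c$ be a cubic polynomial with complex coefficients such that $0<1-|c|^2\le|a\bar c-\bar b|$. Then $P$ has a root $r$ with $|r|\ge1$. *)

From mathcomp Require Import all_boot all_order all_algebra.
From mathcomp Require Import complex.
From mathcomp Require Import reals.

From mathcomp Require Import all_boot all_order all_algebra.
From mathcomp Require Import complex reals ring.
Import Order.TTheory GRing.Theory Num.Theory.
Local Open Scope ring_scope.

(* Let P*(z) = z^3 conj (P (1 / conj z)) = 1 + conj a z + conj b z^2 + conj c z^3
   be the reciprocal polynomial of P and T(z) = (P(z) - c P*(z)) / z its Schur
   transform, a quadratic with leading coefficient 1 - |c|^2 and constant
   coefficient b - c conj a.  If all roots of P lie in the open unit disc then,
   factor by factor, |P*(s)| <= |P(s)| whenever |s| >= 1; hence a root s of T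
   with |s| >= 1 satisfies |P(s)| = |c| |P*(s)| <= |c| |P(s)| and is a root of
   P, as |c| < 1.  Such a root of T exists, for otherwise the product of its
   roots, (b - c conj a) / (1 - |c|^2), would have modulus < 1, against the
   hypothesis. *)

Lemma size_coef_top (R : nzSemiRingType) (p : {poly R}) n :
  (forall j, (n < j)%N -> p`_j = 0) -> p`_n != 0 -> size p = n.+1.
Proof.
move=> /leq_sizeP p_le pn_neq0; apply/eqP; rewrite eqn_leq p_le ltnNge.
by apply: contra pn_neq0 => /(nth_default 0) ->.
Qed.

Section UnitDisc.

Variable C : numClosedFieldType.
Implicit Types (p : {poly C}) (r s : C) (rs : seq C).

Lemma norm_reciprocal_factor_le s r :
  1 <= `|s| -> `|r| < 1 -> `|s * ((s^*)^-1 - r)| <= `|s - r|.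
Proof.
move=> s_ge1 r_lt1.
have s_neq0 : s != 0 by rewrite -normr_gt0 (lt_le_trans ltr01).
have -> : s * ((s^*)^-1 - r) = s / s^* * (1 - r * s^*).
  by field; rewrite conjC_eq0.
rewrite !normrM normfV norm_conjC divff ?normr_eq0 // mul1r.
rewrite -(ler_pXn2r (n := 2)) ?nnegrE // -subr_ge0.
have -> : `|s - r| ^+ 2 - `|1 - r * s^*| ^+ 2 = (`|s| ^+ 2 - 1) * (1 - `|r| ^+ 2).
  by rewrite !normCK !rmorphB !rmorphM rmorph1 /= conjCK; ring.
by rewrite mulr_ge0 // subr_ge0 ?exprn_ege1 // ltW // exprn_ilt1.
Qed.

Lemma norm_reciprocal_prod_XsubC_le s rs :
  1 <= `|s| -> all (fun r => `|r| < 1) rs ->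
  `|s ^+ size rs * (\prod_(r <- rs) ('X - r%:P)).[(s^*)^-1]|
    <= `|(\prod_(r <- rs) ('X - r%:P)).[s]|.
Proof.
move=> s_ge1; elim: rs => [|r rs IHrs] /=; first by rewrite big_nil !hornerE.
case/andP=> r_lt1 /IHrs le_rs; rewrite !big_cons !hornerM !hornerXsubC.
by rewrite exprS mulrACA normrM [leRHS]normrM ler_pM ?normr_ge0 ?norm_reciprocal_factor_le.
Qed.

Lemma in_disc_or_root_outside p :
  p != 0 -> (forall r, root p r -> `|r| < 1) \/ exists2 r, root p r & 1 <= `|r|.
Proof.
case: (closed_field_poly_normal p) => rs p_eq p_neq0.
have root_p r : root p r = (r \in rs).
  by rewrite p_eq rootZ ?root_prod_XsubC // lead_coef_eq0.
have [/hasP[r r_rs r_ge1] | /hasPn rs_lt1] := boolP (has (fun r => 1 <= `|r|) rs).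
  by right; exists r; rewrite ?root_p.
by left=> r; rewrite root_p => /rs_lt1; rewrite real_ltNge ?normr_real ?real1.
Qed.

(* Only the modulus of the reciprocal polynomial s^n conj (p (1 / conj s))
   matters, so the outer conjugation is dropped. *)
Lemma norm_reciprocal_le p s :
  p \is monic -> (forall r, root p r -> `|r| < 1) -> 1 <= `|s| ->
  `|s ^+ (size p).-1 * p.[(s^*)^-1]| <= `|p.[s]|.
Proof.
move=> /monicP p_monic in_disc s_ge1.
case: (closed_field_poly_normal p) => rs; rewrite p_monic scale1r => p_eq.
rewrite p_eq size_prod_XsubC norm_reciprocal_prod_XsubC_le //.
by apply/allP=> r r_rs; rewrite in_disc // p_eq root_prod_XsubC.
Qed.

Lemma root_outside_disc p :
  (1 < size p)%N -> `|lead_coef p| <= `|p`_0| -> exists2 r, root p r & 1 <= `|r|.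
Proof.
move=> p_gt1 lead_le.
have p_neq0 : p != 0 by rewrite -size_poly_gt0 ltnW.
have lead_neq0 : lead_coef p != 0 by rewrite lead_coef_eq0.
have [in_disc|//] := in_disc_or_root_outside p p_neq0.
case: (closed_field_poly_normal p) => rs p_eq.
have p0_eq : `|p`_0| = `|lead_coef p| * \prod_(r <- rs) `|r|.
  by rewrite {1}p_eq coefZ coef0_prod_XsubC !normrM normrX normrN1 expr1n mul1r normr_prod.
move: lead_le; rewrite p0_eq ler_pMr ?normr_gt0 // => prod_ge1.
have in_rs r : r \in rs -> `|r| < 1.
  by move=> r_rs; rewrite in_disc // p_eq rootZ // root_prod_XsubC.
have : (0 < size rs)%N by move: p_gt1; rewrite p_eq size_scale // size_prod_XsubC.
case: rs {p_eq p0_eq} in_rs prod_ge1 => // r rs in_rs; rewrite big_cons => prod_ge1 _.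
suff : `|r| * \prod_(x <- rs) `|x| < 1 by move=> /lt_le_trans/(_ prod_ge1); rewrite ltxx.
rewrite big_seq; apply: le_lt_trans (in_rs r (mem_head _ _)).
rewrite ler_piMr // prodr_ile1 // => x x_rs.
by rewrite normr_ge0 ltW // in_rs // in_cons x_rs orbT.
Qed.

Section Cubic.

Variables a b c : C.

Local Notation P := ('X^3 + a%:P * 'X^2 + b%:P * 'X + c%:P).

Definition schur_cubic : {poly C} :=
  (1 - `|c| ^+ 2)%:P * 'X^2 + (a - c * b^*)%:P * 'X + (b - c * a^* )%:P.

Lemma size_cubic : size P = 4%N.
Proof.
apply: size_coef_top => [[|[|[|[|j]]]] //= _|]; rewrite !coefE //=.
by rewrite !(mulr0, addr0).
by rewrite !(mulr0, addr0, add0r) oner_eq0.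
Qed.

Lemma monic_cubic : P \is monic.
Proof. by rewrite monicE lead_coefE size_cubic !coefE /= !(mulr0, addr0). Qed.

Lemma size_schur_cubic : `|c| ^+ 2 != 1 -> size schur_cubic = 3%N.
Proof.
move=> c_neq1; apply: size_coef_top => [[|[|[|j]]] //= _|]; rewrite !coefE //=.
  by rewrite !(mulr0, addr0).
by rewrite !(mulr0, mulr1, addr0) subr_eq0 eq_sym.
Qed.

Lemma lead_coef_schur_cubic : `|c| ^+ 2 != 1 -> lead_coef schur_cubic = 1 - `|c| ^+ 2.
Proof.
by move=> c_neq1; rewrite lead_coefE size_schur_cubic // !coefE /= !(mulr0, mulr1, addr0).
Qed.

Lemma coef0_schur_cubic : schur_cubic`_0 = b - c * a^*.
Proof. by rewrite !coefE /= !(mulr0, add0r). Qed.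

Lemma cubic_reciprocal s : s != 0 ->
  `|s ^+ 3 * P.[(s^*)^-1]| = `|1 + a^* * s + b^* * s ^+ 2 + c^* * s ^+ 3|.
Proof.
move=> s_neq0; rewrite normrM -(norm_conjC P.[_]) -normrM; congr `|_|.
rewrite !hornerE !(rmorphD, rmorphM, rmorphXn) /= fmorphV /= conjCK.
by field.
Qed.

Lemma cubic_schur_decomposition s :
  P.[s] - c * (1 + a^* * s + b^* * s ^+ 2 + c^* * s ^+ 3) = s * schur_cubic.[s].
Proof. by rewrite /schur_cubic !hornerE /= normCK; ring. Qed.

Theorem cubic_root_outside_disc :
  0 < 1 - `|c| ^+ 2 -> 1 - `|c| ^+ 2 <= `|a * c^* - b^*| ->
  exists r, root P r /\ 1 <= `|r|.
Proof.
move=> schur_gt0 schur_le.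
have c2_neq1 : `|c| ^+ 2 != 1 by rewrite eq_sym -subr_eq0 gt_eqF.
have c_lt1 : `|c| < 1.
  by rewrite -(ltr_pXn2r (_ : 0 < 2)%N) ?nnegrE // expr1n -subr_gt0.
have [in_disc|[r Pr r_ge1]] :=
  in_disc_or_root_outside P (monic_neq0 monic_cubic); last by exists r.
have [s Qs s_ge1] : exists2 s, root schur_cubic s & 1 <= `|s|.
  apply: root_outside_disc; first by rewrite size_schur_cubic.
  rewrite lead_coef_schur_cubic // coef0_schur_cubic ger0_norm ?(ltW schur_gt0) //.
  by rewrite -[leRHS]norm_conjC rmorphB rmorphM /= conjCK distrC [c^* * a]mulrC.
exists s; split => //.
have s_neq0 : s != 0 by rewrite -normr_gt0 (lt_le_trans ltr01).
have Ps_eq : P.[s] = c * (1 + a^* * s + b^* * s ^+ 2 + c^* * s ^+ 3).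
  by apply/eqP; rewrite -subr_eq0 cubic_schur_decomposition (rootP Qs) mulr0.
have := norm_reciprocal_le P s monic_cubic in_disc s_ge1.
rewrite size_cubic cubic_reciprocal // => reciprocal_le.
have Ps_le : `|P.[s]| <= `|c| * `|P.[s]|.
  by rewrite {1}Ps_eq normrM; apply: ler_wpM2l.
rewrite /root; have [//|Ps_neq0] := eqVneq P.[s] 0.
have Ps_gt : `|c| * `|P.[s]| < `|P.[s]| by rewrite gtr_pMl ?normr_gt0.
by have := lt_le_trans Ps_gt Ps_le; rewrite ltxx.
Qed.

End Cubic.

End UnitDisc.

Local Open Scope complex_scope.

Theorem lemma5p5 (R : realType) (a b c : R[i]) :
  0 < 1 - `|c| ^+ 2 -> 1 - `|c| ^+ 2 <= `|a * c^* - b^*| ->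
  exists r : R[i], root ('X^3 + a%:P * 'X^2 + b%:P * 'X + c%:P) r /\ 1 <= `|r|.
Proof. exact: cubic_root_outside_disc. Qed.
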